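(* Let $R$ be a commutative integral domain with identity, $\Gamma$ a discrete group with identity $e$, and $(\mathcal{G},c)\in\mathcal{C}_{R,\Gamma}$. Let $g\in\Gamma$ and $(m,n)\in N_R(\mathcal{G})_g$. Then: (1) $mn=1_{s(\operatorname{supp}(n))}$ and $nm=1_{s(\operatorname{supp}(m))}$; (2) $\operatorname{supp}(m)$ is a compact open bisection contained in $c^{-1}(g)$; (3) $\operatorname{supp}(n)=\operatorname{supp}(m)^{-1}$.
   Context: An ample Hausdorff groupoid is a Hausdorff topological groupoid whose range and source maps $r,s$ are local homeomorphisms and whose unit space $\mathcal{G}^0$ has a basis of compact open sets; a bisection is a subset on which $r$ and $s$ restrict to homeomorphisms onto open subsets of $\mathcal{G}^0$; $\mathcal{G}_x^x=\{\eta:s(\eta)=r(\eta)=x\}$. A continuous cocycle is a continuous groupoid homomorphism $c:\mathcal{G}\to\Gamma$. $A_R(\mathcal{G})$ is the Steinberg algebra: locally constant compactly supported functions $\mathcal{G}\to R$, pointwise addition, convolution $(f*g)(\eta)=\sum_{\alpha\beta=\eta}f(\alpha)g(\beta)$; $D_R(\mathcal{G})$ is the subalgebra of functions supported in $\mathcal{G}^0$; $\operatorname{supp}(f)=\{\eta:f(\eta)\ne0\}$; $1_U$ is the indicator function of $U$; $A_R(\mathcal{G})_g=\{f:\operatorname{supp}(f)\subseteq c^{-1}(g)\}$. $\mathcal{C}_{R,\Gamma}$ is the class of pairs $(\mathcal{G},c)$ with $\mathcal{G}$ an ample Hausdorff groupoid and $c:\mathcal{G}\to\Gamma$ a continuous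 cocycle such that there is a dense $X\subseteq\mathcal{G}^0$ with the group ring $R(c^{-1}(e)\cap\mathcal{G}_x^x)$ having no zero-divisors and only trivial units (every invertible element is of the form $uh$, $u\in R$, $h$ in the group) for all $x\in X$. A normaliser of $D_R(\mathcal{G})$ is a pair $(m,n)\in A_R(\mathcal{G})\times A_R(\mathcal{G})$ with $mD_R(\mathcal{G})n\cup nD_R(\mathcal{G})m\subseteq D_R(\mathcal{G})$, $mnm=m$ and $nmn=n$; $N_R(\mathcal{G})$ is the set of normalisers and $N_R(\mathcal{G})_g=N_R(\mathcal{G})\cap(A_R(\mathcal{G})_g\times A_R(\mathcal{G})_{g^{-1}})$. *)

From HB Require Import structures.
From mathcomp Require Import all_boot all_algebra.
From Stdlib Require Import ClassicalDescription IndefiniteDescription.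
Set Implicit Arguments. Unset Strict Implicit. Unset Printing Implicit Defensive.
Import GRing.Theory.
Local Open Scope ring_scope.

(* Groupoids: a set with partially defined multiplication (a*b is only
   meaningful when s a = r b), inverse, source and range maps.  The unit
   space is {x | r x = x}.                                              *)
Record groupoid := Groupoid {
  gcar :> Type;
  gmul : gcar -> gcar -> gcar;
  ginv : gcar -> gcar;
  gs : gcar -> gcar;
  gr : gcar -> gcar;
  gs_r : forall a, gs (gr a) = gr a;
  gr_r : forall a, gr (gr a) = gr a;
  gs_s : forall a, gs (gs a) = gs a;
  gr_s : forall a, gr (gs a) = gs a;
  gs_mul : forall a b, gs a = gr b -> gs (gmul a b) = gs b;
  gr_mul : forall a b, gs a = gr b -> gr (gmul a b) = gr a;
  gmulA : forall a b c, gs a = gr b -> gs b = gr c ->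
            gmul (gmul a b) c = gmul a (gmul b c);
  gmul_r : forall a, gmul (gr a) a = a;
  gmul_s : forall a, gmul a (gs a) = a;
  gs_inv : forall a, gs (ginv a) = gr a;
  gr_inv : forall a, gr (ginv a) = gs a;
  gmulV : forall a, gmul a (ginv a) = gr a;
  gmulVl : forall a, gmul (ginv a) a = gs a
}.

Section Groupoids.
Variable G : groupoid.

Definition unit_space (x : G) : Prop := gr x = x.

Definition img (f : G -> G) (S : G -> Prop) : G -> Prop :=
  fun y => exists x, S x /\ f x = y.

Definition isotropy (x : G) : G -> Prop := fun a => gs a = x /\ gr a = x.

Variable op : (G -> Prop) -> Prop.

Definition is_topology : Prop :=
  op (fun _ => True) /\
  (forall U V, op U -> op V -> op (fun x => U x /\ V x)) /\
  (forall (I : Type) (F : I -> G -> Prop),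
      (forall i, op (F i)) -> op (fun x => exists i, F i x)).

Definition open_in_units (W : G -> Prop) : Prop :=
  exists V, op V /\ forall x, W x <-> (V x /\ unit_space x).

Definition compact (K : G -> Prop) : Prop :=
  forall (I : Type) (F : I -> G -> Prop),
    (forall i, op (F i)) -> (forall x, K x -> exists i, F i x) ->
    exists l : seq I, forall x, K x -> exists i, List.In i l /\ F i x.

Definition closure (S : G -> Prop) : G -> Prop :=
  fun x => forall U, op U -> U x -> exists y, U y /\ S y.

Definition hausdorff : Prop :=
  forall x y : G, x <> y -> exists U V, op U /\ op V /\ U x /\ V y /\
    forall z, ~ (U z /\ V z).

Definition dense_in_units (X : G -> Prop) : Prop :=
  forall W, open_in_units W -> (exists x, W x) -> exists x, W x /\ X x.

Definition homeo_onto_open (f : G -> G) (B : G -> Prop) : Prop :=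
  (forall x y, B x -> B y -> f x = f y -> x = y) /\
  (forall x, B x -> unit_space (f x)) /\
  open_in_units (img f B) /\
  (forall V, op V -> exists W, op W /\ forall x, B x -> (V (f x) <-> W x)) /\
  (forall W, op W -> exists V, op V /\ forall y,
      img f (fun x => B x /\ W x) y <-> (V y /\ img f B y)).

Definition local_homeo (f : G -> G) : Prop :=
  forall a, exists U, op U /\ U a /\ homeo_onto_open f U.

Definition bisection (B : G -> Prop) : Prop :=
  homeo_onto_open (@gr G) B /\ homeo_onto_open (@gs G) B.

Definition mul_continuous : Prop :=
  forall O, op O -> forall a b : G, gs a = gr b -> O (gmul a b) ->
    exists U V, op U /\ op V /\ U a /\ V b /\
      forall a' b', U a' -> V b' -> gs a' = gr b' -> O (gmul a' b').

Definition inv_continuous : Prop :=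
  forall O, op O -> op (fun x => O (ginv x)).

Definition units_compact_open_basis : Prop :=
  forall W x, open_in_units W -> W x ->
    exists K, open_in_units K /\ compact K /\ (forall y, K y -> W y) /\ K x.

Definition ample_hausdorff : Prop :=
  is_topology /\ mul_continuous /\ inv_continuous /\ hausdorff /\
  local_homeo (@gr G) /\ local_homeo (@gs G) /\ units_compact_open_basis.

(* continuous cocycle into a discrete group *)
Definition cocycle (Gam : groupType) (c : G -> Gam) : Prop :=
  (forall a b, gs a = gr b -> c (gmul a b) = (c a * c b)%g) /\
  (forall S : Gam -> Prop, op (fun x => S (c x))).

Variable R : idomainType.

(* sum of F over the (assumed finite) set of a with P a and F a <> 0;
   defaults to 0 if that set is infinite *)
Definition fsum (P : G -> Prop) (F : G -> R) : R :=
  match excluded_middle_informative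
          (exists l : seq G, List.NoDup l /\
             forall a, List.In a l <-> (P a /\ F a <> 0)) with
  | left h => \sum_(a <- proj1_sig (constructive_indefinite_description _ h)) F a
  | right _ => 0
  end.

(* (f*g)(eta) = sum_{alpha beta = eta} f(alpha) g(beta);
   the pairs are alpha with r alpha = r eta, beta = alpha^-1 eta *)
Definition conv (f g : G -> R) : G -> R :=
  fun eta => fsum (fun a => gr a = gr eta) (fun a => f a * g (gmul (ginv a) eta)).

Definition supp (f : G -> R) : G -> Prop := fun x => f x <> 0.

Definition ind (U : G -> Prop) : G -> R :=
  fun x => if excluded_middle_informative (U x) then 1 else 0.

Definition locally_constant (f : G -> R) : Prop :=
  forall x, exists U, op U /\ U x /\ forall y, U y -> f y = f x.

Definition steinberg (f : G -> R) : Prop :=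
  locally_constant f /\ compact (closure (supp f)).

Definition diagonal (f : G -> R) : Prop :=
  steinberg f /\ forall x, supp f x -> unit_space x.

Definition homogeneous (Gam : groupType) (c : G -> Gam) (g : Gam) (f : G -> R) :=
  steinberg f /\ forall x, supp f x -> c x = g.

Definition normaliser (m n : G -> R) : Prop :=
  steinberg m /\ steinberg n /\
  (forall d, diagonal d ->
     diagonal (conv (conv m d) n) /\ diagonal (conv (conv n d) m)) /\
  conv (conv m n) m = m /\ conv (conv n m) n = n.

Definition normaliser_deg (Gam : groupType) (c : G -> Gam) (g : Gam) (m n : G -> R) :=
  normaliser m n /\ homogeneous c g m /\ homogeneous c (g^-1)%g n.

(* Group ring R(H) of a subgroup H of an isotropy group G_x^x, realised as
   the finitely supported functions G -> R with support in H; the group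
   ring product is the convolution (restricted to such functions) and the
   unit is the indicator of {x}.                                        *)
Definition gr_elt (H : G -> Prop) (a : G -> R) : Prop :=
  (forall y, supp a y -> H y) /\
  exists l : seq G, forall y, supp a y -> List.In y l.

Definition zerof : G -> R := fun _ => 0.

Definition gr_no_zero_divisors (H : G -> Prop) : Prop :=
  forall a b, gr_elt H a -> gr_elt H b -> conv a b = zerof ->
    a = zerof \/ b = zerof.

Definition gr_trivial_units (H : G -> Prop) (x : G) : Prop :=
  forall a, gr_elt H a ->
    (exists b, gr_elt H b /\ conv a b = ind (fun y => y = x) /\
                             conv b a = ind (fun y => y = x)) ->
    exists (u : R) (h : G), H h /\ a = (fun y => u * ind (fun z => z = h) y).

(* (G,c) in C_{R,Gamma} (G assumed ample Hausdorff separately) *)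
Definition in_class (Gam : groupType) (c : G -> Gam) : Prop :=
  exists X : G -> Prop, (forall x, X x -> unit_space x) /\ dense_in_units X /\
    forall x, X x ->
      let H := fun a => c a = 1%g /\ isotropy x a in
      gr_no_zero_divisors H /\ gr_trivial_units H x.

End Groupoids.

(* For a normaliser (m, n), the products m n and n m are supported on the
   unit space, and m n m = m forces (m n)(r a) = 1 and (n m)(s a) = 1 on supp m.
   Cutting m by indicators of disjoint compact open sets of units shows that
   points of supp m with the same range have the same source.  Over a unit x
   of the dense set X, translating m and n by a point a1 of supp m with range x
   gives mutually inverse elements of the group ring R(c^-1(e) ∩ G_x^x); as this
   ring has no zero divisors and only trivial units, they are supported at x,
   which leaves a1 as the only point of supp m over x.  By density and the
   Hausdorff property, r is injective on all of supp m, and likewise on supp n.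
   Then (m n)(r a) = 1 yields supp n = (supp m)^-1, which gives (3), (1), and
   injectivity of s on the compact open set supp m, hence (2). *)

From Pilot Require Import Defs.
From HB Require Import structures.
From mathcomp Require Import all_boot all_algebra.
From mathcomp Require Import boolp classical_sets cardinality fsbigop.
From Stdlib Require Import ClassicalDescription IndefiniteDescription.
Set Implicit Arguments. Unset Strict Implicit. Unset Printing Implicit Defensive.
Import GRing.Theory.
Local Open Scope ring_scope.
Local Open Scope classical_set_scope.

HB.instance Definition _ (G : groupoid) := gen_eqMixin (gcar G).
HB.instance Definition _ (G : groupoid) := gen_choiceMixin (gcar G).

Section Lists.
Variable T : choiceType.

Lemma List_In_mem (x : T) (s : seq T) : List.In x s <-> x \in s.
Proof.
elim: s => [|y s IH] /=; first by split.
rewrite in_cons; split.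
  by case=> [->|/IH ->]; rewrite ?eqxx ?orbT.
by case/orP=> [/eqP ->|/IH]; [left|right].
Qed.

Lemma List_NoDup_uniq (s : seq T) : List.NoDup s <-> uniq s.
Proof.
elim: s => [|y s IH] /=; first by split => // _; constructor.
split.
  move=> h; inversion h; subst; apply/andP; split; last exact/IH.
  by apply/negP => /List_In_mem.
case/andP => h1 h2; constructor; last exact/IH.
by move/List_In_mem; apply/negP.
Qed.

Lemma finite_set_List (S : set T) : finite_set S ->
  exists l : seq T, forall y, S y -> List.In y l.
Proof. by case/finite_seqP => s e; exists s => y; rewrite e => /List_In_mem. Qed.

End Lists.

Section GroupoidAlgebra.
Variable G : groupoid.
Implicit Types a b u : G.

Lemma unit_space_gr a : unit_space (gr a). Proof. exact: gr_r. Qed.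
Lemma unit_space_gs a : unit_space (gs a). Proof. exact: gr_s. Qed.

Lemma gs_unit u : unit_space u -> gs u = u.
Proof. by rewrite /unit_space => h; rewrite -h gs_r. Qed.

Lemma ginv_unit u : unit_space u -> ginv u = u.
Proof.
move=> h; have e : gr (ginv u) = u by rewrite gr_inv gs_unit.
by rewrite -[ginv u]gmul_r e gmulV h.
Qed.

Lemma gmulKg a b : gs a = gr b -> gmul (ginv a) (gmul a b) = b.
Proof. by move=> h; rewrite -gmulA ?gs_inv ?gmulVl ?h ?gmul_r. Qed.

Lemma gmulKVg a b : gr a = gr b -> gmul a (gmul (ginv a) b) = b.
Proof.
move=> e; rewrite -gmulA; [|by rewrite gr_inv|by rewrite gs_inv].
by rewrite gmulV e gmul_r.
Qed.

Lemma gmulgK a b : gs a = gr b -> gmul (gmul a b) (ginv b) = a.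
Proof. by move=> h; rewrite gmulA ?gr_inv ?gmulV -?h ?gmul_s. Qed.

Lemma gmulgKV a b : gs a = gs b -> gmul (gmul a (ginv b)) b = a.
Proof. by move=> h; rewrite gmulA ?gr_inv ?gs_inv ?gmulVl -?h ?gmul_s. Qed.

Lemma ginvK a : ginv (ginv a) = a.
Proof. by rewrite -[ginv (ginv a)]gmul_s gs_inv gr_inv -gmulVl gmulKg // gs_inv. Qed.

Lemma gr_mulV a b : gr a = gr b -> gr (gmul (ginv a) b) = gs a.
Proof. by move=> e; rewrite gr_mul ?gs_inv // gr_inv. Qed.

Lemma ginvM a b : gs a = gr b -> ginv (gmul a b) = gmul (ginv b) (ginv a).
Proof.
move=> h.
have e : gs (gmul a b) = gr (gmul (ginv b) (ginv a)).
  by rewrite gs_mul // gr_mul ?gs_inv ?gr_inv.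
have eb : gmul b (gmul (ginv b) (ginv a)) = ginv a.
  by rewrite gmulKVg // gr_inv h.
have eab : gmul (gmul a b) (gmul (ginv b) (ginv a)) = gr (gmul a b).
  rewrite gmulA //; last by rewrite gr_mul ?gs_inv ?gr_inv.
  by rewrite eb gmulV gr_mul.
by rewrite -[RHS](gmulKg e) eab -gs_inv gmul_s.
Qed.

Lemma gmulI a b b' : gs a = gr b -> gs a = gr b' -> gmul a b = gmul a b' -> b = b'.
Proof. by move=> h1 h2 e; rewrite -(gmulKg h1) e gmulKg. Qed.

Lemma ginvMV a b eta : gr a = gr b -> gr a = gr eta ->
  gmul (ginv (gmul (ginv a) b)) (gmul (ginv a) eta) = gmul (ginv b) eta.
Proof.
move=> ab ae.
rewrite ginvM ?gs_inv // ginvK gmulA ?gs_inv //; last by rewrite gr_mulV.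
by rewrite gmulKVg.
Qed.

End GroupoidAlgebra.

Section Convolution.
Variables (G : groupoid) (R : idomainType).
Implicit Types (a b : G) (f h d : G -> R).

Lemma fsumE (P : set G) (F : G -> R) : fsum P F = \sum_(a \in P) F a.
Proof.
rewrite /fsum; case: excluded_middle_informative => [h|h].
  case: (constructive_indefinite_description _ h) => l /= [nd hl].
  rewrite (fsbigE l) //.
  - rewrite [RHS]big_mkcond; apply: eq_big_seq => x /List_In_mem/hl [Px _].
    by rewrite ifT //; apply: mem_set.
  - exact/List_NoDup_uniq.
  - by move=> x /= /List_In_mem /hl [].
  - move=> i Pi ni; case: (eqVneq (F i) 0) => // /eqP Fi.
    by case/negP: ni; apply/List_In_mem/hl.
rewrite fsbig_dflt // => /finite_seqP [s hs]; apply: h.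
exists (undup s); split; first by apply/List_NoDup_uniq; exact: undup_uniq.
move=> a; rewrite List_In_mem mem_undup.
have: (P `&` F @^-1` [set~ 0]) a <-> [set` s] a by rewrite hs.
by move=> e; split => [/e|/e].
Qed.

Lemma fsbig_supp_sub (P Q : set G) (F : G -> R) : Q `<=` P ->
  (forall a, P a -> F a <> 0 -> Q a) -> \sum_(a \in P) F a = \sum_(a \in Q) F a.
Proof.
move=> QP h; rewrite (fsbig_widen Q P) // => a [Pa nQa] /=.
by apply: contra_notP nQa => /h; apply.
Qed.

Lemma convE f h eta :
  conv f h eta = \sum_(a \in [set a | gr a = gr eta]) f a * h (gmul (ginv a) eta).
Proof. by rewrite /conv fsumE. Qed.

Lemma conv_sub f h eta (S : set G) : S `<=` [set a | gr a = gr eta] ->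
  (forall a, gr a = gr eta -> f a <> 0 -> S a) ->
  conv f h eta = \sum_(a \in S) f a * h (gmul (ginv a) eta).
Proof.
move=> SA hS; rewrite convE (fsbig_supp_sub (Q := S)) // => a /= ea.
by case: (eqVneq (f a) 0) => [->|/eqP fa _]; [rewrite mul0r|exact: hS].
Qed.

Arguments conv_sub {f h eta} S _ _.

Lemma conv_neq0 f h eta : conv f h eta <> 0 ->
  exists a, gr a = gr eta /\ f a <> 0 /\ h (gmul (ginv a) eta) <> 0.
Proof.
move=> hn; apply: NNPP => hne; apply: hn; rewrite convE; apply: fsbig1 => a /= ea.
case: (eqVneq (f a) 0) => [->|/eqP fa]; first by rewrite mul0r.
case: (eqVneq (h (gmul (ginv a) eta)) 0) => [->|/eqP ha]; first by rewrite mulr0.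
by case: hne; exists a.
Qed.

Definition supported_on_units d := forall x, d x <> 0 -> unit_space x.

Definition rfinite f := forall x, finite_set [set a | f a <> 0 /\ gr a = x].

Lemma conv_units_r f d eta : supported_on_units d -> conv f d eta = f eta * d (gs eta).
Proof.
move=> hd; rewrite convE (fsbig_supp_sub (Q := [set eta])).
- by rewrite fsbig_set1 gmulVl.
- by move=> a /= ->.
move=> a /= ea; case: (eqVneq (d (gmul (ginv a) eta)) 0) => [->|/eqP /hd u _].
  by rewrite mulr0.
rewrite /unit_space gr_mulV // in u.
by rewrite -(gmulKVg ea) -u gmul_s.
Qed.

Lemma conv_units_l f d eta : supported_on_units d -> conv d f eta = d (gr eta) * f eta.
Proof.
move=> hd; rewrite convE (fsbig_supp_sub (Q := [set gr eta])).
- by rewrite fsbig_set1 (ginv_unit (unit_space_gr eta)) gmul_r.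
- by move=> a /= ->; rewrite gr_r.
move=> a /= ea; case: (eqVneq (d a) 0) => [->|/eqP /hd u _]; first by rewrite mul0r.
by rewrite -ea u.
Qed.

Lemma rfinite_conv_units f d : rfinite f -> supported_on_units d -> rfinite (conv f d).
Proof.
move=> rf hd x; apply: sub_finite_set (rf x) => a [h ea]; split => //.
by apply: contra_not h; rewrite conv_units_r // => ->; rewrite mul0r.
Qed.

Lemma convB f h k eta : rfinite f ->
  conv f (fun x => h x - k x) eta = conv f h eta - conv f k eta.
Proof.
move=> rf; set S := [set a | f a <> 0 /\ gr a = gr eta].
have finS : finite_set S := rf (gr eta).
have SA : S `<=` [set a | gr a = gr eta] by move=> a [].
have hS : forall a, gr a = gr eta -> f a <> 0 -> S a by [].
rewrite !(conv_sub _ SA hS) !fsbig_finite // -sumrB.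
by apply: eq_bigr => a _; rewrite mulrBr.
Qed.

Section Associativity.
Variables (f h k : G -> R) (eta : G).
Hypotheses (rf : rfinite f) (rh : rfinite h).

Let Af := [set b | f b <> 0 /\ gr b = gr eta].
Let A2 := \bigcup_(b in Af) [set gmul b d | d in [set d | h d <> 0 /\ gr d = gs b]].
Let F a b := f b * h (gmul (ginv b) a) * k (gmul (ginv a) eta).

Let A2_gr a : A2 a -> gr a = gr eta.
Proof. by case=> b [_ eb] [d [_ ed] <-]; rewrite gr_mul // ed. Qed.

Let A2_mem a b : Af b -> gr a = gr eta -> h (gmul (ginv b) a) <> 0 -> A2 a.
Proof.
move=> Afb ea ha; exists b => //; case: Afb => _ eb; exists (gmul (ginv b) a).
  by split => //; rewrite gr_mulV // ea.
by rewrite gmulKVg // ea.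
Qed.

Let conv_Af a : gr a = gr eta ->
  conv f h a = \sum_(b \in Af) f b * h (gmul (ginv b) a).
Proof.
move=> ea; rewrite (conv_sub Af) //; first by move=> x [_ ex]; rewrite /= ex.
by move=> x ex fx; split => //; rewrite ex.
Qed.

Let convA_l : conv (conv f h) k eta = \sum_(a \in A2) \sum_(b \in Af) F a b.
Proof.
rewrite (conv_sub A2); first last.
- move=> a ea; rewrite conv_Af // => hfh.
  have [b Afb] : exists2 b, Af b & f b * h (gmul (ginv b) a) != 0.
    apply: (@fsbigN1 _ _ _ _ _ Af (fun a0 b => f b * h (gmul (ginv b) a0)) a).
    by apply/eqP; exact: hfh.
  by rewrite mulf_eq0 negb_or => /andP[_ /eqP]; exact: A2_mem.
- by move=> a A2a; exact: (A2_gr A2a).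
apply: eq_fsbigr => a /set_mem A2a.
by rewrite conv_Af ?(A2_gr A2a) // mulr_fsuml.
Qed.

Let convA_r : conv f (conv h k) eta = \sum_(b \in Af) \sum_(a \in A2) F a b.
Proof.
rewrite (conv_sub Af); [|by move=> x []|by []].
apply: eq_fsbigr => b /set_mem [fb eb].
rewrite convE mulr_fsumr (reindex_fsbig (fun a => gmul (ginv b) a) [set a | gr a = gr eta]).
- rewrite (fsbig_supp_sub (Q := A2)) //.
    apply: eq_fsbigr => a /set_mem A2a; have ea := A2_gr A2a.
    by rewrite /F ginvMV ?eb // mulrA.
  move=> a ea; rewrite ginvMV ?eb //.
  case: (eqVneq (h (gmul (ginv b) a)) 0) => [->|/eqP hb]; first by rewrite mul0r mulr0.
  by move=> _; exact: (A2_mem (conj fb eb) ea hb).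
split.
- by move=> a ea; rewrite /= gr_mulV ?ea ?eb // gr_mulV // eb.
- move=> a a' /set_mem ea /set_mem ea' e.
  by apply: (gmulI (a := ginv b)) => //; rewrite gs_inv ?ea ?ea'.
- move=> d /= ed; exists (gmul b d).
    by rewrite /= gr_mul -?eb // ed gr_mulV // eb.
  by rewrite gmulKg // ed gr_mulV // eb.
Qed.

Lemma convA : conv (conv f h) k eta = conv f (conv h k) eta.
Proof.
rewrite convA_l convA_r exchange_fsbig //; last exact: rf.
by apply: bigcup_finite => [|b _]; [exact: rf | apply: finite_image; exact: rh].
Qed.

End Associativity.

Lemma fsbig_gmulr (F : G -> R) a1 x :
  \sum_(a \in [set a | gr a = x /\ gs a = gr a1]) F (gmul a a1) =
  \sum_(b \in [set b | gr b = x /\ gs b = gs a1]) F b.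
Proof.
rewrite [RHS](reindex_fsbig (fun a => gmul a a1) [set a | gr a = x /\ gs a = gr a1]) //.
split.
- by move=> a [ra sa]; split; [rewrite gr_mul | rewrite gs_mul].
- move=> a b /set_mem [_ sa] /set_mem [_ sb] e.
  by rewrite -(gmulgK sa) e gmulgK.
- move=> b [rb sb]; exists (gmul b (ginv a1)); last by rewrite gmulgKV.
  by split; rewrite ?gr_mul ?gs_mul ?gs_inv ?gr_inv.
Qed.

End Convolution.

Section AmpleTopology.
Variables (G : groupoid) (op : (G -> Prop) -> Prop).
Hypothesis hG : ample_hausdorff op.
Implicit Types a b u x y : G.

Lemma ample_topology : is_topology op. Proof. by case: hG. Qed.
Lemma ample_sep : hausdorff op. Proof. by case: hG => _ [_ [_ []]]. Qed.
Lemma ample_gr_local : local_homeo op (@gr G). Proof. by case: hG => _ [_ [_ [_ []]]]. Qed.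
Lemma ample_gs_local : local_homeo op (@gs G). Proof. by case: hG => _ [_ [_ [_ [_ []]]]]. Qed.
Lemma ample_basis : units_compact_open_basis op.
Proof. by case: hG => _ [_ [_ [_ [_ []]]]]. Qed.

Lemma op_ext (A B : G -> Prop) : (forall x, A x <-> B x) -> op A -> op B.
Proof. by move=> e; have -> : A = B by apply: funext => x; apply: propext. Qed.

Lemma op_setT : op (fun _ => True). Proof. by case: ample_topology. Qed.

Lemma op_setI (A B : G -> Prop) : op A -> op B -> op (fun x => A x /\ B x).
Proof. by case: ample_topology => _ [h _]; apply: h. Qed.

Lemma op_bigcup (I : Type) (F : I -> G -> Prop) : (forall i, op (F i)) ->
  op (fun x => exists i, F i x).
Proof. by case: ample_topology => _ [_ h]; apply: h. Qed.

Lemma op_set0 : op (fun _ => False).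
Proof.
apply: (op_ext (A := fun x => exists i : False, True)); first by move=> x; split => [[]|].
by apply: op_bigcup => -[].
Qed.

Lemma op_bigcap (I : Type) (F : I -> G -> Prop) (l : seq I) : (forall i, op (F i)) ->
  op (fun x => forall i, List.In i l -> F i x).
Proof.
move=> hF; elim: l => [|i l IH].
  by apply: (op_ext (A := fun _ => True)) => [x|]; [split|exact: op_setT].
apply: (op_ext (A := fun x => F i x /\ forall j, List.In j l -> F j x)); last exact: op_setI.
move=> x; split => [[h1 h2] j /= [<-|]|h]; [done|exact: h2|].
by split => [|j hj]; apply: h => /=; [left|right].
Qed.

Lemma op_nbhs (A : G -> Prop) :
  (forall x, A x -> exists U, op U /\ U x /\ forall y, U y -> A y) -> op A.
Proof.
move=> h.
have F (i : {x | A x}) : {U | op U /\ U (proj1_sig i) /\ forall y, U y -> A y}.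
  by case: i => x Ax; apply: constructive_indefinite_description; exact: h.
apply: (op_ext (A := fun x => exists i, proj1_sig (F i) x)).
  move=> x; split => [[i]|Ax].
    by case: (F i) => U /= [_ [_ hU]]; apply: hU.
  by exists (exist _ x Ax); case: (F _) => U /= [_ []].
by apply: op_bigcup => i; case: (F i) => U [].
Qed.

Lemma local_homeo_continuous (f : G -> G) : local_homeo op f ->
  forall V, op V -> op (fun x => V (f x)).
Proof.
move=> hf V oV; apply: op_nbhs => a Va.
case: (hf a) => U [oU [Ua [_ [_ [_ [hc _]]]]]].
case: (hc V oV) => W [oW hW].
exists (fun x => U x /\ W x); split; first exact: op_setI.
by split; [split => //; apply/hW | move=> y [Uy Wy]; apply/hW].
Qed.

Lemma op_unit_space : op (@unit_space G).
Proof.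
apply: op_nbhs => x ux.
case: (ample_gr_local x) => U [oU [Ux [inj [_ [_ [hc _]]]]]].
case: (hc U oU) => W [oW hW].
exists (fun a => U a /\ W a); split; first exact: op_setI.
split; first by split => //; apply/(hW x Ux); rewrite ux.
move=> a [Ua Wa]; have Ura : U (gr a) by apply/hW.
by apply: inj => //; rewrite gr_r.
Qed.

Lemma compact_closed (K : G -> Prop) x : compact op K -> ~ K x ->
  exists U, op U /\ U x /\ forall z, U z -> ~ K z.
Proof.
move=> cK nKx.
have F (i : {z | K z}) : {UV : (G -> Prop) * (G -> Prop) | op UV.1 /\ op UV.2 /\
    UV.1 (proj1_sig i) /\ UV.2 x /\ forall w, ~ (UV.1 w /\ UV.2 w)}.
  case: i => z Kz; apply: constructive_indefinite_description.
  have zx : z <> x by move=> e; apply: nKx; rewrite -e.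
  by case: (ample_sep zx) => U [V [oU [oV [Uz [Vx d]]]]]; exists (U, V).
have [l hl] : exists l, forall z, K z -> exists i, List.In i l /\ (proj1_sig (F i)).1 z.
  apply: cK => [i|z Kz]; first exact: (proj2_sig (F i)).1.
  by exists (exist _ z Kz); exact: (proj2_sig (F _)).2.2.1.
exists (fun w => forall i, List.In i l -> (proj1_sig (F i)).2 w); split.
  by apply: op_bigcap => i; exact: (proj2_sig (F i)).2.1.
split; first by move=> i _; exact: (proj2_sig (F i)).2.2.2.1.
move=> z hz Kz; case: (hl z Kz) => i [il hi].
exact: (proj2_sig (F i)).2.2.2.2 z (conj hi (hz i il)).
Qed.

Lemma compact_fibre_finite (f : G -> G) K y : local_homeo op f -> compact op K ->
  finite_set [set a | K a /\ f a = y].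
Proof.
move=> hf cK.
have F (a : G) : {U | op U /\ U a /\ homeo_onto_open op f U}.
  by apply: constructive_indefinite_description; exact: hf.
have [l hl] : exists l, forall z, K z -> exists i, List.In i l /\ proj1_sig (F i) z.
  apply: cK => [a|z Kz]; first exact: (proj2_sig (F a)).1.
  by exists z; exact: (proj2_sig (F z)).2.1.
pose pick i := xget i [set a | (K a /\ f a = y) /\ proj1_sig (F i) a].
apply: (sub_finite_set (B := [set` map pick l])); last exact: finite_seq.
move=> a [Ka fa]; case: (hl a Ka) => i [il Ua].
have [[_ fp] Up] : (K (pick i) /\ f (pick i) = y) /\ proj1_sig (F i) (pick i).
  exact: (@xgetI _ i [set b | (K b /\ f b = y) /\ proj1_sig (F i) b] a).
have -> : a = pick i by apply: (proj2_sig (F i)).2.2.1 => //; rewrite fa fp.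
by rewrite /= map_f //; apply/List_In_mem.
Qed.

End AmpleTopology.

Section Indicators.
Variables (G : groupoid) (R : idomainType).
Implicit Types (W P : G -> Prop) (x : G).

Lemma ind_in W x : W x -> ind R W x = 1.
Proof. by rewrite /ind; case: excluded_middle_informative. Qed.

Lemma ind_out W x : ~ W x -> ind R W x = 0.
Proof. by rewrite /ind; case: excluded_middle_informative. Qed.

Lemma supp_ind W x : supp (ind R W) x <-> W x.
Proof.
split => [sx|Wx]; first by apply: contra_notP sx => /ind_out.
by rewrite /supp ind_in //; apply/eqP; exact: oner_neq0.
Qed.

Lemma ind_neq0 W x : ind R W x <> 0 -> W x.
Proof. exact: (supp_ind W x).1. Qed.

Lemma ind_mulr_neq0 P x (y : R) : ind R P x * y <> 0 -> P x /\ y <> 0.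
Proof.
case: (excluded_middle_informative (P x)) => Px; first by rewrite ind_in // mul1r.
by rewrite ind_out // mul0r.
Qed.

End Indicators.

Section CompactOpenUnits.
Variables (G : groupoid) (op : (G -> Prop) -> Prop) (R : idomainType).
Hypothesis hG : ample_hausdorff op.
Implicit Types (W : G -> Prop) (x y : G).

Definition compact_open_units W := open_in_units op W /\ compact op W.

Lemma open_in_units_unit W x : open_in_units op W -> W x -> unit_space x.
Proof. by case=> V [_ h] /h []. Qed.

Lemma open_in_units_op W : open_in_units op W -> op W.
Proof.
case=> V [oV h]; apply: (op_ext (A := fun x => V x /\ unit_space x)).
  by move=> x; rewrite h.
by apply: (op_setI hG oV); exact: op_unit_space.
Qed.

Lemma open_in_unitsI W1 W2 : open_in_units op W1 -> open_in_units op W2 ->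
  open_in_units op (fun x => W1 x /\ W2 x).
Proof.
move=> [V1 [o1 h1]] [V2 [o2 h2]]; exists (fun x => V1 x /\ V2 x); split.
  exact: (op_setI hG o1 o2).
by move=> x; rewrite h1 h2; tauto.
Qed.

Lemma diagonal_ind W : compact_open_units W -> Defs.diagonal op (ind R W).
Proof.
move=> [oW cW]; split; last first.
  move=> x sx; apply: (open_in_units_unit oW). exact: (supp_ind R W x).1 sx.
split.
  move=> x; case: (excluded_middle_informative (W x)) => Wx.
    exists W; split; first exact: open_in_units_op.
    by split => // y Wy; rewrite !ind_in.
  case: (compact_closed hG cW Wx) => U [oU [Ux hU]].
  exists U; do 2 split => //; move=> y Uy.
  by rewrite !ind_out // => /(hU y Uy).
have -> : Defs.closure op (supp (ind R W)) = W; last exact: cW.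
apply: funext => x; apply: propext; split => [cx|Wx U oU Ux]; last first.
  by exists x; split => //; exact: (supp_ind R W x).2 Wx.
apply: NNPP => Wx; case: (compact_closed hG cW Wx) => U [oU [Ux hU]].
by case: (cx U oU Ux) => y [Uy sy]; apply: (hU y Uy); exact: (supp_ind R W y).1 sy.
Qed.

Lemma compact_open_units_cover (S : set G) : finite_set S ->
  (forall x, S x -> unit_space x) -> exists W, compact_open_units W /\ forall x, S x -> W x.
Proof.
case/finite_seqP => s -> {S}; elim: s => [|y s IH] hu.
  exists (fun _ => False); split => //; split; last by move=> I F _ _; exists [::] => x [].
  by exists (fun _ => False); split; [exact: (op_set0 hG) | move=> x; split => [|[]]].
case: IH => [x xs|W [[[VW [oVW hW]] cW] sW]]; first by apply: hu; rewrite /= in_cons xs orbT.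
have ou : open_in_units op (@unit_space G).
  by exists (fun _ => True); split; [exact: (op_setT hG) | move=> x; split => [|[]]].
have uy : unit_space y by apply: hu; rewrite /= in_cons eqxx.
case: (ample_basis hG ou uy) => K [[VK [oVK hK]] [cK [_ Ky]]].
exists (fun x => K x \/ W x); split; last first.
  by move=> x; rewrite /= in_cons => /orP [/eqP ->|/sW]; [left|right].
split.
  exists (fun x => exists b : bool, (if b then VK else VW) x); split.
    by apply: (op_bigcup hG) => -[].
  move=> x; rewrite hK hW; split.
    by case=> -[? ?]; split => //; [exists true|exists false].
  by case=> -[[] ? ?]; [left|right].
move=> I F oF cov.
case: (cK I F oF) => [x Kx|lK hlK]; first by apply: cov; left.
case: (cW I F oF) => [x Wx|lW hlW]; first by apply: cov; right.
exists (lK ++ lW) => x [/hlK|/hlW] [i [il Fi]]; exists i; split => //;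
  apply: List.in_or_app; [left|right] => //.
Qed.

Lemma compact_open_units_sep y1 y2 : unit_space y1 -> unit_space y2 -> y1 <> y2 ->
  exists W1 W2, compact_open_units W1 /\ compact_open_units W2 /\ W1 y1 /\ W2 y2 /\
    forall x, ~ (W1 x /\ W2 x).
Proof.
move=> u1 u2 ne; case: (ample_sep hG ne) => U1 [U2 [o1 [o2 [h1 [h2 d]]]]].
have ou U : op U -> open_in_units op (fun x => U x /\ unit_space x) by exists U.
case: (ample_basis hG (ou _ o1) (conj h1 u1)) => K1 [oK1 [cK1 [s1 K1y]]].
case: (ample_basis hG (ou _ o2) (conj h2 u2)) => K2 [oK2 [cK2 [s2 K2y]]].
exists K1, K2; do 4 (split => //).
by move=> x [/s1 [? _] /s2 [? _]]; apply: (d x).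
Qed.

End CompactOpenUnits.

Section SteinbergAlgebra.
Variables (G : groupoid) (op : (G -> Prop) -> Prop) (R : idomainType).
Hypothesis hG : ample_hausdorff op.
Implicit Types (f d : G -> R).

Lemma closure_supp f : locally_constant op f -> Defs.closure op (supp f) = supp f.
Proof.
move=> lc; apply: funext => x; apply: propext.
split => [cx|sx U oU Ux]; last by exists x.
apply: NNPP => nx; case: (lc x) => U [oU [Ux hU]].
case: (cx U oU Ux) => y [Uy]; apply; rewrite hU //.
exact: NNPP.
Qed.

Lemma steinberg_compact f : steinberg op f -> compact op (supp f).
Proof. by case=> lc; rewrite closure_supp. Qed.

Lemma steinberg_open f : steinberg op f -> op (supp f).
Proof.
case=> lc _; apply: (op_nbhs hG) => x sx; case: (lc x) => U [oU [Ux hU]].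
by exists U; do 2 (split => //); move=> y Uy; rewrite /supp hU.
Qed.

Lemma steinberg_rfinite f : steinberg op f -> rfinite f.
Proof.
move=> sf x; have := compact_fibre_finite x (ample_gr_local hG) (steinberg_compact sf).
by apply: sub_finite_set => a [].
Qed.

Lemma diagonal_units d : Defs.diagonal op d -> supported_on_units d.
Proof. by case=> _ h x /h. Qed.

End SteinbergAlgebra.

Lemma normaliser_sym (G : groupoid) op (R : idomainType) (m n : G -> R) :
  normaliser op m n -> normaliser op n m.
Proof.
case=> hm [hn [hd [e1 e2]]]; do 2 (split => //); split => //.
by move=> d dd; case: (hd d dd).
Qed.

Section NormaliserUnits.
Variables (G : groupoid) (op : (G -> Prop) -> Prop) (R : idomainType).
Hypothesis hG : ample_hausdorff op.
Variables m n : G -> R.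
Hypothesis hN : normaliser op m n.

(* [m * n] agrees near any point with [m * 1_K * n], which is diagonal, once
   the compact open [K] contains the finitely many relevant sources. *)
Lemma conv_normaliser_units : supported_on_units (conv m n).
Proof.
have [sm _] := hN.
have hd d : Defs.diagonal op d -> Defs.diagonal op (conv (conv m d) n).
  by case: hN => _ [_ [hd _]] /hd [].
move=> eta; set S := [set gs a | a in [set a | m a <> 0 /\ gr a = gr eta]].
have uS : forall x, S x -> unit_space x by move=> x [a _ <-]; exact: unit_space_gs.
have finS : finite_set S by apply: finite_image; exact: (steinberg_rfinite hG sm (gr eta)).
case: (compact_open_units_cover hG finS uS) => K [cK hK].
have dK := diagonal_ind R hG cK.
suff -> : conv m n eta = conv (conv m (ind R K)) n eta.
  by apply: diagonal_units; exact: hd.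
rewrite !convE; apply: eq_fsbigr => a /set_mem ea.
rewrite conv_units_r; last exact: diagonal_units dK.
case: (eqVneq (m a) 0) => [->|/eqP ma]; first by rewrite !mul0r.
by rewrite ind_in ?mulr1 //; apply: hK; exists a.
Qed.

End NormaliserUnits.

Section Normaliser.
Variables (G : groupoid) (op : (G -> Prop) -> Prop) (R : idomainType).
Hypothesis hG : ample_hausdorff op.
Variables m n : G -> R.
Hypothesis hN : normaliser op m n.
Implicit Types (a : G) (W : G -> Prop).

Let rm : rfinite m. Proof. by case: hN => sm _; exact: (steinberg_rfinite hG sm). Qed.
Let rn : rfinite n. Proof. by case: hN => _ [sn _]; exact: (steinberg_rfinite hG sn). Qed.
Let mn_units := conv_normaliser_units hG hN.
Let nm_units := conv_normaliser_units hG (normaliser_sym hN).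

Lemma conv_normaliser_gr a : m a <> 0 -> conv m n (gr a) = 1.
Proof.
move=> /eqP ma; apply: (mulIf ma); rewrite mul1r -conv_units_l //.
by case: hN => _ [_ [_ [-> _]]].
Qed.

Lemma conv_normaliser_gs a : m a <> 0 -> conv n m (gs a) = 1.
Proof.
move=> /eqP ma; apply: (mulIf ma); rewrite mul1r mulrC -conv_units_r //.
by rewrite -convA //; case: hN => _ [_ [_ [-> _]]].
Qed.

Let cut W := conv (conv m (ind R W)) n.

Let cut_units W : compact_open_units op W -> supported_on_units (cut W).
Proof.
move=> cW; case: hN => _ [_ [hd _]].
exact: (diagonal_units (hd _ (diagonal_ind R hG cW)).1).
Qed.

Lemma conv_cut_gr W a : compact_open_units op W -> m a <> 0 -> W (gs a) -> cut W (gr a) = 1.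
Proof.
move=> cW /eqP ma Wa; have uW := diagonal_units (diagonal_ind R hG cW).
apply: (mulIf ma); rewrite mul1r -conv_units_l; last exact: cut_units.
rewrite /cut convA //; last exact: rfinite_conv_units.
by rewrite conv_units_r // conv_normaliser_gs ?conv_units_r ?ind_in ?mulr1 //; apply/eqP.
Qed.

(* [1_W1 * (n * m) * 1_W2 = 0] for disjoint [W1], [W2], because [n * m] is
   supported on units. *)
Lemma conv_cut_disjoint W1 W2 x : compact_open_units op W1 -> compact_open_units op W2 ->
  (forall y, ~ (W1 y /\ W2 y)) -> conv (cut W1) (cut W2) x = 0.
Proof.
move=> c1 c2 dis.
have u1 := diagonal_units (diagonal_ind R hG c1).
have u2 := diagonal_units (diagonal_ind R hG c2).
have r1 : rfinite (conv m (ind R W1)) by exact: rfinite_conv_units.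
have r2 : rfinite (conv m (ind R W2)) by exact: rfinite_conv_units.
have nm2 b : conv n (conv m (ind R W2)) b = conv n m b * ind R W2 (gs b).
  by rewrite -convA // conv_units_r.
have nm2_units : supported_on_units (conv n (conv m (ind R W2))).
  by move=> b; rewrite nm2 => h; apply: nm_units => e; apply: h; rewrite e mul0r.
rewrite /cut convA // convE; apply: fsbig1 => a /= ea.
rewrite conv_units_r // -convA // (@conv_units_l _ _ n (conv n (conv m (ind R W2)))) //.
rewrite nm2 gs_r gr_mulV //.
case: (excluded_middle_informative (W1 (gs a))) => w1.
  by rewrite [ind R W2 _]ind_out ?mulr0 ?mul0r ?mulr0 // => w2; apply: (dis (gs a)).
by rewrite [ind R W1 _]ind_out // mulr0 mul0r.
Qed.

(* For disjoint compact open [W1 \ni s a1] and [W2 \ni s a2] the cut-downs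
   [m 1_Wi n] are orthogonal, yet both equal [1] at [r a1 = r a2]. *)
Lemma normaliser_gs_eq a1 a2 : m a1 <> 0 -> m a2 <> 0 -> gr a1 = gr a2 -> gs a1 = gs a2.
Proof.
move=> h1 h2 e; apply: NNPP => ne.
have [W1 [W2 [c1 [c2 [w1 [w2 dis]]]]]] :=
  compact_open_units_sep hG (unit_space_gs a1) (unit_space_gs a2) ne.
have := conv_cut_disjoint (gr a1) c1 c2 dis.
rewrite conv_units_r; last exact: cut_units.
rewrite gs_r conv_cut_gr // e conv_cut_gr // mulr1.
by move/eqP; rewrite oner_eq0.
Qed.

End Normaliser.

Section Cocycle.
Variables (G : groupoid) (op : (G -> Prop) -> Prop) (Gam : groupType) (c : G -> Gam).
Hypothesis hc : cocycle op c.

Lemma cocycleM (a b : G) : gs a = gr b -> c (gmul a b) = (c a * c b)%g.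
Proof. by case: hc => h _; apply: h. Qed.

Lemma cocycle_unit (u : G) : unit_space u -> c u = 1%g.
Proof.
move=> hu; have e : gmul u u = u by rewrite -{1}hu gmul_r.
apply: (@mulIg _ (c u)); rewrite mul1g -cocycleM ?e //.
by rewrite gs_unit.
Qed.

Lemma cocycleV (a : G) : c (ginv a) = ((c a)^-1)%g.
Proof.
apply/esym/mulg1_eq; rewrite -cocycleM ?gr_inv // gmulV cocycle_unit //; exact: unit_space_gr.
Qed.

End Cocycle.

Definition ker_isotropy (G : groupoid) (Gam : groupType) (c : G -> Gam) (x : G) : G -> Prop :=
  fun a => c a = 1%g /\ isotropy x a.

Section IsotropyGroupRing.
Variables (G : groupoid) (op : (G -> Prop) -> Prop) (R : idomainType).
Variables (Gam : groupType) (c : G -> Gam).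
Hypothesis hc : cocycle op c.
Variable x0 : G.
Hypothesis ux0 : unit_space x0.
Local Notation H := (ker_isotropy c x0).
Local Notation I := (ind R (fun y => y = x0)).
Implicit Types (a b : G) (f h : G -> R).

Lemma ker_isotropy_id : H x0.
Proof. by split; [exact: (cocycle_unit hc ux0) | split; [exact: gs_unit | exact: ux0]]. Qed.

Lemma ker_isotropyM a b : gs a = gr b -> H a -> H b -> H (gmul a b).
Proof.
move=> e [ca [sa ra]] [cb [sb rb]].
split; first by rewrite (cocycleM hc) // ca cb mulg1.
by split; [rewrite gs_mul | rewrite gr_mul].
Qed.

Lemma ker_isotropyVM a b : gr a = gr b -> H a -> H b -> H (gmul (ginv a) b).
Proof.
move=> e [ca [sa ra]] [cb [sb rb]].
split; first by rewrite (cocycleM hc) ?gs_inv // (cocycleV hc) ca cb invg1 mulg1.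
by split; [rewrite gs_mul ?gs_inv | rewrite gr_mulV].
Qed.

Lemma gr_elt_finite f : gr_elt H f -> finite_set (supp f).
Proof.
case=> _ [l hl]; apply: (sub_finite_set (B := [set` l])); last exact: finite_seq.
by move=> y /hl /List_In_mem.
Qed.

Lemma gr_elt_rfinite f : gr_elt H f -> rfinite f.
Proof. by move=> /gr_elt_finite fin x; apply: sub_finite_set fin => a []. Qed.

Lemma ind1_units : supported_on_units I.
Proof. by move=> x /ind_neq0 ->. Qed.

Lemma gr_elt_ind1 : gr_elt H I.
Proof.
split; first by move=> y /ind_neq0 ->; exact: ker_isotropy_id.
by exists [:: x0] => y /ind_neq0 ->; left.
Qed.

Lemma conv_ind1r f : gr_elt H f -> conv f I = f.
Proof.
case=> hf _; apply: funext => a; rewrite conv_units_r; last exact: ind1_units.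
case: (eqVneq (f a) 0) => [->|/eqP /hf [_ [sa _]]]; first by rewrite mul0r.
by rewrite ind_in ?mulr1.
Qed.

Lemma conv_ind1l f : gr_elt H f -> conv I f = f.
Proof.
case=> hf _; apply: funext => a; rewrite conv_units_l; last exact: ind1_units.
case: (eqVneq (f a) 0) => [->|/eqP /hf [_ [_ ra]]]; first by rewrite mulr0.
by rewrite ind_in ?mul1r.
Qed.

Lemma gr_elt_conv f h : gr_elt H f -> gr_elt H h -> gr_elt H (conv f h).
Proof.
move=> ef eh; have [hf _] := ef; have [hh _] := eh.
have supp_conv y : supp (conv f h) y ->
    exists2 a, supp f a & exists2 b, supp h b & gmul a b = y.
  case/conv_neq0 => a [ea [fa ha]]; exists a => //.
  by exists (gmul (ginv a) y) => //; rewrite gmulKVg.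
split.
  move=> y /supp_conv [a /hf Ha [b /hh Hb <-]].
  by apply: ker_isotropyM => //; case: Ha => _ [-> _]; case: Hb => _ [_ ->].
apply: finite_set_List; apply: (sub_finite_set (B := [set gmul a b | a in supp f & b in supp h])).
  by move=> y /supp_conv [a fa [b hb <-]]; exists a => //; exists b.
by apply: finite_image2; exact: gr_elt_finite.
Qed.

Lemma gr_elt_sub f h : gr_elt H f -> gr_elt H h -> gr_elt H (fun x => f x - h x).
Proof.
move=> ef eh; have [hf _] := ef; have [hh _] := eh.
have supp_sub y : supp (fun x => f x - h x) y -> supp f y \/ supp h y.
  rewrite /supp => nz; apply: NNPP => /not_orP [/NNPP f0 /NNPP h0].
  by apply: nz; rewrite f0 h0 subrr.
split; first by move=> y /supp_sub [/hf|/hh].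
apply: finite_set_List; apply: (sub_finite_set (B := supp f `|` supp h)); first exact: supp_sub.
by rewrite finite_setU; split; exact: gr_elt_finite.
Qed.

(* A left inverse is two-sided since [f * (h * f - 1) = 0] and [f <> 0]; then
   [f] is a trivial unit [u h0], and [f x0 <> 0] forces [h0 = x0]. *)
Lemma gr_left_invertible_supp f h :
  gr_no_zero_divisors R H -> gr_trivial_units R H x0 ->
  gr_elt H f -> gr_elt H h -> conv f h = I -> f x0 <> 0 ->
  forall k, f k <> 0 -> k = x0.
Proof.
move=> hND hTU ef eh fh fx0.
have rf := gr_elt_rfinite ef; have rh := gr_elt_rfinite eh.
pose d x := conv h f x - I x.
have fd : conv f d = zerof R.
  apply: funext => x; rewrite /d convB // -convA // fh conv_ind1l // conv_ind1r //.
  exact: subrr.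
have hf : conv h f = I.
  case: (hND f d ef (gr_elt_sub (gr_elt_conv eh ef) gr_elt_ind1) fd) => [f0|d0].
    by case: fx0; rewrite f0.
  by apply: funext => x; apply/eqP; rewrite -subr_eq0; exact/eqP/(congr1 (fun d => d x) d0).
have [u [h0 [_ fE]]] := hTU f ef (ex_intro _ h (conj eh (conj fh hf))).
have supp_f k : f k <> 0 -> k = h0.
  by rewrite fE; apply: contra_notP => kh; rewrite ind_out ?mulr0.
by move=> k /supp_f ->; rewrite -(supp_f x0 fx0).
Qed.

End IsotropyGroupRing.

Section NormaliserIsotropy.
Variables (G : groupoid) (op : (G -> Prop) -> Prop) (R : idomainType).
Hypothesis hG : ample_hausdorff op.
Variables (Gam : groupType) (c : G -> Gam).
Hypothesis hc : cocycle op c.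
Variables (g : Gam) (m n : G -> R).
Hypothesis hN : normaliser op m n.
Hypothesis hmg : forall x, m x <> 0 -> c x = g.
Variable a1 : G.
Hypothesis ma1 : m a1 <> 0.
Local Notation x0 := (gr a1).
Local Notation H := (ker_isotropy c x0).
Local Notation I := (ind R (fun y => y = x0)).
Implicit Types (a b eta : G).

(* The translates of [m] and [n] by [a1], cut down to [H]: elements of the
   group ring of [H] with [mH * nH = 1]. *)
Let mH a := ind R H a * m (gmul a a1).
Let nH a := ind R H a * n (gmul (ginv a1) a).

Let ux0 : unit_space x0. Proof. exact: unit_space_gr. Qed.

Lemma ker_isotropy_translate a : gr a = x0 -> gs a = x0 -> m (gmul a a1) <> 0 -> H a.
Proof.
move=> ra sa maa; split; last by split.
have := hmg maa; rewrite (cocycleM hc) // (hmg ma1).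
by move/(canRL (mulgK g)); rewrite mulgV.
Qed.

Lemma gr_elt_mH : gr_elt H mH.
Proof.
have supp_mH a : mH a <> 0 -> gmul a a1 \in [set b | m b <> 0 /\ gr b = x0] /\ H a.
  move=> nz; have [[ca [sa ra]] maa] := ind_mulr_neq0 nz; split => //; apply/mem_set.
  by split => //; rewrite gr_mul.
split; first by move=> a /supp_mH [].
apply: finite_set_List.
apply: (sub_finite_set (B := (fun b => gmul b (ginv a1)) @` [set b | m b <> 0 /\ gr b = x0])).
  move=> a /supp_mH [/set_mem mb [_ [sa _]]]; exists (gmul a a1) => //.
  by rewrite gmulgK.
apply: finite_image; case: hN => sm _; exact: (steinberg_rfinite hG sm x0).
Qed.

Lemma gr_elt_nH : gr_elt H nH.
Proof.
have supp_nH a : nH a <> 0 -> n (gmul (ginv a1) a) <> 0 /\ gr (gmul (ginv a1) a) = gs a1 /\ H a.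
  by move=> nz; have [[ca [sa ra]] na] := ind_mulr_neq0 nz; rewrite gr_mulV.
split; first by move=> a /supp_nH [_ []].
apply: finite_set_List.
apply: (sub_finite_set (B := gmul a1 @` [set b | n b <> 0 /\ gr b = gs a1])).
  move=> a /supp_nH [na [ea [_ [_ ra]]]]; exists (gmul (ginv a1) a) => //.
  by rewrite gmulKVg.
apply: finite_image; case: hN => _ [sn _]; exact: (steinberg_rfinite hG sn (gs a1)).
Qed.

Lemma conv_mH_nH_ker eta : H eta -> conv mH nH eta = conv m n eta.
Proof.
move=> He; have [_ [se re]] := He; rewrite !convE re.
rewrite (fsbig_supp_sub (Q := [set a | gr a = x0 /\ gs a = x0])); first last.
- move=> a ra nz; have [[_ [sa _]] _] : H a /\ m (gmul a a1) <> 0.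
    by apply: ind_mulr_neq0; apply: contra_not nz; rewrite /mH => ->; rewrite mul0r.
  by split.
- by move=> a [].
rewrite [RHS](fsbig_supp_sub (Q := [set b | gr b = x0 /\ gs b = gs a1])); first last.
- move=> b rb mnb; split => //; apply: (normaliser_gs_eq hG hN) => // mb0.
  by apply: mnb; rewrite mb0 mul0r.
- by move=> b [].
rewrite -fsbig_gmulr; apply: eq_fsbigr => a /set_mem [ra sa].
rewrite ginvM ?sa // gmulA ?gs_inv ?gr_inv ?ra ?re //.
case: (eqVneq (m (gmul a a1)) 0) => [m0|/eqP maa]; first by rewrite /mH m0 mulr0 !mul0r.
have Ha := ker_isotropy_translate ra sa maa.
have Hb : H (gmul (ginv a) eta) by apply: (ker_isotropyVM hc) => //; rewrite ra re.
by rewrite /mH /nH !ind_in // !mul1r.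
Qed.

Lemma conv_mH_nH : conv mH nH = I.
Proof.
apply: funext => eta; case: (excluded_middle_informative (H eta)) => He; last first.
  rewrite ind_out; last by move=> e; apply: He; rewrite e; exact: (ker_isotropy_id hc ux0).
  apply: NNPP => nz; apply: He.
  exact: (gr_elt_conv hc gr_elt_mH gr_elt_nH).1 eta nz.
rewrite conv_mH_nH_ker //.
case: (excluded_middle_informative (eta = x0)) => [->|ne].
  by rewrite ind_in // (conv_normaliser_gr hG hN ma1).
rewrite ind_out //; apply: NNPP => /(conv_normaliser_units hG hN) u; apply: ne.
by case: He => _ [_ <-]; rewrite u.
Qed.

(* The cocycle and the group ring of [H] pin down [a1]: if [a2] has the same
   range, then [a2 a1^-1] lies in [H] and in the support of [mH]. *)
Lemma normaliser_gr_inj_at a2 :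
  gr_no_zero_divisors R H -> gr_trivial_units R H x0 ->
  m a2 <> 0 -> gr a2 = x0 -> a2 = a1.
Proof.
move=> hND hTU ma2 ra2.
have mH_x0 : mH x0 <> 0 by rewrite /mH ind_in ?gmul_r ?mul1r //; exact: (ker_isotropy_id hc ux0).
have supp_mH := gr_left_invertible_supp hc ux0 hND hTU gr_elt_mH gr_elt_nH conv_mH_nH mH_x0.
have s21 : gs a2 = gs a1 by apply: (normaliser_gs_eq hG hN).
set k := gmul a2 (ginv a1).
have ka : gmul k a1 = a2 by rewrite gmulgKV.
have Hk : H k.
  split; first by rewrite (cocycleM hc) ?gr_inv // (cocycleV hc) (hmg ma1) (hmg ma2) mulgV.
  by split; rewrite ?gs_mul ?gr_mul ?gr_inv ?gs_inv.
have : mH k <> 0 by rewrite /mH ind_in // mul1r ka.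
by move/supp_mH => kx0; rewrite -ka kx0 gmul_r.
Qed.

End NormaliserIsotropy.

Section LocalHomeomorphisms.
Variables (G : groupoid) (op : (G -> Prop) -> Prop).
Hypothesis hG : ample_hausdorff op.
Implicit Types (f : G -> G) (B U W : G -> Prop).

Lemma open_in_units_nbhs (Z : G -> Prop) :
  (forall y, Z y -> exists W, open_in_units op W /\ W y /\ forall z, W z -> Z z) ->
  open_in_units op Z.
Proof.
move=> h.
have F (i : {y | Z y}) : {WV : (G -> Prop) * (G -> Prop) | op WV.2 /\
    (forall x, WV.1 x <-> WV.2 x /\ unit_space x) /\ WV.1 (proj1_sig i) /\
    forall z, WV.1 z -> Z z}.
  case: i => y Zy; apply: constructive_indefinite_description.
  by case: (h y Zy) => W [[V [oV hV]] [Wy hW]]; exists (W, V).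
exists (fun x => exists i, (proj1_sig (F i)).2 x); split.
  by apply: (op_bigcup hG) => i; exact: (proj2_sig (F i)).1.
move=> x; split => [Zx|[[i Vi] ux]].
  have [_ [e [Wx _]]] := proj2_sig (F (exist _ x Zx)).
  by case/e: Wx => Vx ux; split => //; exists (exist _ x Zx).
by have [_ [e [_ hz]]] := proj2_sig (F i); apply: hz; apply/e.
Qed.

Lemma homeo_img_open f U W : homeo_onto_open op f U -> op W ->
  open_in_units op (img f (fun x => U x /\ W x)).
Proof.
move=> [_ [_ [[V0 [o0 h0]] [_ hopen]]]] oW.
case: (hopen W oW) => V [oV hV].
exists (fun y => V y /\ V0 y); split; first exact: (op_setI hG oV o0).
by move=> y; rewrite hV h0; tauto.
Qed.

Lemma local_homeo_img_open f B : local_homeo op f -> op B -> open_in_units op (img f B).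
Proof.
move=> hf oB; apply: open_in_units_nbhs => y [a [Ba <-]].
case: (hf a) => U [oU [Ua hU]].
exists (img f (fun x => U x /\ B x)); split; first exact: homeo_img_open.
by split; [exists a | move=> z [x [[_ Bx] <-]]; exists x].
Qed.

Lemma local_homeo_inj f B : local_homeo op f -> (forall x, unit_space (f x)) -> op B ->
  (forall x y, B x -> B y -> f x = f y -> x = y) -> homeo_onto_open op f B.
Proof.
move=> hf fu oB inj; do 2 split => //; split; first exact: local_homeo_img_open.
split.
  by move=> V oV; exists (fun x => V (f x)); split => //; exact: (local_homeo_continuous hG hf).
move=> W oW; have [V [oV hV]] := local_homeo_img_open hf (op_setI hG oB oW).
exists V; split => // y; split.
  move=> hy; have [Vy _] := (hV y).1 hy; split => //.
  by case: hy => x [[Bx _] <-]; exists x.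
by move=> [Vy [x [Bx e]]]; apply/(hV y).2; split => //; rewrite -e.
Qed.

End LocalHomeomorphisms.

Section Bisection.
Variables (G : groupoid) (op : (G -> Prop) -> Prop) (R : idomainType).
Hypothesis hG : ample_hausdorff op.
Variables (Gam : groupType) (c : G -> Gam).
Hypothesis hc : cocycle op c.
Hypothesis hC : in_class op R c.
Variables (m n : G -> R).
Hypothesis hN : normaliser op m n.
Implicit Types (a : G).

(* The points where the group ring of [c^-1(e) /\ G_x^x] is well behaved are
   dense, so two points of [supp m] with the same range can be separated by
   open sets whose ranges still meet at such a point. *)
Lemma normaliser_gr_inj g : (forall x, m x <> 0 -> c x = g) ->
  forall a1 a2, m a1 <> 0 -> m a2 <> 0 -> gr a1 = gr a2 -> a1 = a2.
Proof.
move=> hmg a1 a2 h1 h2 e; apply: NNPP => ne.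
case: (ample_sep hG ne) => O1 [O2 [o1 [o2 [O1a [O2a dis]]]]].
have sm : op (supp m) by case: hN => sm _; exact: (steinberg_open hG sm).
set Z1 := img (@gr G) (fun x => O1 x /\ supp m x).
set Z2 := img (@gr G) (fun x => O2 x /\ supp m x).
have oZ : open_in_units op (fun y => Z1 y /\ Z2 y).
  by apply: (open_in_unitsI hG); apply: (local_homeo_img_open hG (ample_gr_local hG));
    exact: (op_setI hG).
case: hC => X [_ [dX hX]].
case: (dX _ oZ) => [|u [[[b1 [[Ob1 mb1] rb1]] [b2 [[Ob2 mb2] rb2]]] Xu]].
  by exists (gr a1); split; [exists a1 | exists a2; rewrite e].
have [hND hTU] := hX u Xu.
move: hND hTU; rewrite -rb1 => hND hTU.
have eb : b2 = b1 by apply: (normaliser_gr_inj_at hG hc hN hmg mb1) => //; rewrite rb1 rb2.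
by apply: (dis b1); split => //; rewrite -eb.
Qed.

Lemma normaliser_supp_ginv : (forall a1 a2, m a1 <> 0 -> m a2 <> 0 -> gr a1 = gr a2 -> a1 = a2) ->
  forall eta, m eta <> 0 -> n (ginv eta) <> 0.
Proof.
move=> inj eta me ne.
have := conv_normaliser_gr hG hN me; rewrite convE (fsbig_supp_sub (Q := [set eta])).
- by rewrite fsbig_set1 -gs_inv gmul_s ne mulr0 => /eqP; rewrite eq_sym oner_eq0.
- by move=> a /= ->; rewrite gr_r.
move=> a /= ea nz; apply: inj => //; last by rewrite ea gr_r.
by apply: contra_not nz => ->; rewrite mul0r.
Qed.

Lemma conv_normaliser_ind : (forall eta, m eta <> 0 -> n (ginv eta) <> 0) ->
  conv m n = ind R (img (@gs G) (supp n)).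
Proof.
move=> supp_nV; apply: funext => x.
case: (excluded_middle_informative (img (@gs G) (supp n) x)) => [[b [nb <-]]|hx].
  by rewrite ind_in; [exact: (conv_normaliser_gs hG (normaliser_sym hN)) | exists b].
rewrite ind_out //; apply: NNPP => hp; apply: hx.
have ux : unit_space x by exact: (conv_normaliser_units hG hN).
have [a [ea [ma _]]] := conv_neq0 hp.
by exists (ginv a); split; [exact: supp_nV | rewrite gs_inv ea].
Qed.

End Bisection.

Unset Implicit Arguments.
Set Strict Implicit.

Theorem mainTheorem3 (R : idomainType) (Gam : groupType) (G : groupoid)
    (op : (G -> Prop) -> Prop) (hG : ample_hausdorff op)
    (c : G -> Gam) (hc : cocycle op c) (hC : in_class op R c)
    (g : Gam) (m n : G -> R) (hmn : normaliser_deg op c g m n) :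
  (conv m n = ind R (img (@gs G) (supp n)) /\
   conv n m = ind R (img (@gs G) (supp m))) /\
  (compact op (supp m) /\ op (supp m) /\ bisection op (supp m) /\
   (forall x, supp m x -> c x = g)) /\
  (forall eta, supp n eta <-> supp m (ginv eta)).
Proof.
case: hmn => hN [[sm hmg] [sn hng]]; have hN' := normaliser_sym hN.
have inj_m := normaliser_gr_inj hG hc hC hN hmg.
have inj_n := normaliser_gr_inj hG hc hC hN' hng.
have supp_mV := normaliser_supp_ginv hG hN inj_m.
have supp_nV := normaliser_supp_ginv hG hN' inj_n.
have supp_nE eta : supp n eta <-> supp m (ginv eta).
  by split => [/supp_nV|/supp_mV]; rewrite ?ginvK.
have om := steinberg_open hG sm.
split; first by split; [exact: (conv_normaliser_ind hG hN) | exact: (conv_normaliser_ind hG hN')].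
split; last exact: supp_nE.
split; first exact: (steinberg_compact sm).
split; first exact: om.
split=> //; split; apply: local_homeo_inj => //.
- exact: (ample_gr_local hG).
- exact: unit_space_gr.
- exact: (ample_gs_local hG).
- exact: unit_space_gs.
move=> x y mx my e; rewrite -[x]ginvK -[y]ginvK; congr ginv.
by apply: inj_n; rewrite ?gr_inv //; apply: supp_mV.
Qed.
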